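(* Let $G$ be a group, let $(\Gamma,\psi)$ be a $G$-gain graph on $n$ vertices, let $\pi$ be a unitary representation of $G$, and let $\alpha=\{C_0,C_1,\dots,C_{2k}\}$ be a $\pi$-WQH partition of the vertex set of $\Gamma$. Let $(\Gamma^\alpha,\psi^\alpha)$ be the gain graph obtained from $(\Gamma,\psi)$ and $\alpha$ as described in the context, and let $Q_\alpha$ be the matrix associated with $\alpha$. Then, with vertices ordered as $C_0,C_1,\dots,C_{2k}$, $$\pi(A_{(\Gamma^\alpha,\psi^\alpha)})=\pi(Q_\alpha)\,\pi(A_{(\Gamma,\psi)})\,\pi(Q_\alpha),$$ and in particular $(\Gamma,\psi)$ and $(\Gamma^\alpha,\psi^\alpha)$ are $\pi$-cospectral.
   Context: A $G$-gain graph $(\Gamma,\psi)$ consists of a directed graph $\Gamma=(V,A)$ in which every arc $(u,w)$ has its reverse $(w,u)$ (no loops), and a gain function $\psi:A\to G$ with $\psi(w,u)=\psi(u,w)^{-1}$. Set $\psi(v,w)=0\in\mathbb{C}G$ when $v,w$ are not adjacent. For $V=\{v_1,\dots,v_n\}$, the adjacency matrix $A_{(\Gamma,\psi)}\in M_n(\mathbb{C}G)$ has $(i,j)$ entry $\psi(v_i,v_j)$ if $v_i\sim v_j$ and $0$ otherwise; $\mathbb{C}G$ is the complex group algebra with neutral element $1_G$. A unitary representation of degree $d$ is a group homomorphism $\pi:G\to U_d(\mathbb{C})$; it is extended linearly to an algebra homomorphism $\pi:\mathbb{C}G\to M_d(\mathbb{C})$, and to matrices $M\in M_{a,b}(\mathbb{C}G)$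 by replacing each entry $M_{i,j}$ by the $d\times d$ block $\pi(M_{i,j})$. The matrix $\pi(A_{(\Gamma,\psi)})$ is Hermitian; its spectrum is the $\pi$-spectrum of $(\Gamma,\psi)$, and two gain graphs are $\pi$-cospectral if they have the same $\pi$-spectrum. Given a partition $\alpha=\{C_0,\dots,C_{2k}\}$ of $V$, let $\Psi_i(v)=\sum_{w\in C_i,\,w\sim v}\psi(v,w)\in\mathbb{C}G$. It is a $\pi$-WQH partition if: (1) $|C_i|=|C_{i+1}|$ for every odd $i<2k$; (2) for $i,j\in\{1,\dots,2k\}$ and $v,v'\in C_i$, $\pi(\Psi_j(v))=\pi(\Psi_j(v'))$; (3) for odd $i,j<2k$ and $v\in C_i$, $v'\in C_{i+1}$, $\pi(\Psi_j(v))=\pi(\Psi_{j+1}(v'))$ and $\pi(\Psi_{j+1}(v))=\pi(\Psi_j(v'))$; (4) for every $v\in C_0$ and odd $i<2k$, either (a) $\Psi_i(v)=\Psi_{i+1}(v)$, or (b) $\Psi_i(v)=|C_i|g_1$ and $\Psi_{i+1}(v)=|C_{i+1}|g_2$ for some distinct $g_1,g_2\in G\cup\{0\}$. The gain graph $(\Gamma^\alpha,\psi^\alpha)$ on the same vertex set is defined by (with $\psi^\alpha(v,w)=0$ meaning non-adjacency): $\psi^\alpha(v,w)=\psi(v,w)$ for $v,w\in C_1\cup\dots\cup C_{2k}$ and for $v,w\in C_0$; for $v\in C_0$ and odd $i<2k$ with $\Psi_i(v)=\Psi_{i+1}(v)$, $\psi^\alpha(v,w)=\psi(v,w)$ for $w\in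 C_i\cup C_{i+1}$; for $v\in C_0$ and odd $i<2k$ in case (b) with $g_1,g_2$, $\psi^\alpha(v,w)=g_2$ for $w\in C_i$ and $\psi^\alpha(v,w)=g_1$ for $w\in C_{i+1}$ (reversed arcs get inverse gains). For $m\ge1$ let $Q_m=\begin{pmatrix} I_m-\frac1m J_m & \frac1m J_m\\ \frac1m J_m & I_m-\frac1m J_m\end{pmatrix}\in M_{2m}(\mathbb{C}G)$, with $I_m$ the identity (diagonal entries $1_G$) and $J_m$ the all-$1_G$ matrix. With $m_t=|C_{2t-1}|=|C_{2t}|$, $t=1,\dots,k$, let $Q_\alpha=\mathrm{diag}(I_{|C_0|},Q_{m_1},\dots,Q_{m_k})\in M_n(\mathbb{C}G)$. *)

From HB Require Import structures.
From mathcomp Require Import all_boot all_order all_algebra.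
From mathcomp Require Import reals complex.
Set Implicit Arguments. Unset Strict Implicit. Unset Printing Implicit Defensive.
Import Order.TTheory GRing.Theory Num.Theory.
Local Open Scope ring_scope.

(* psi v w = Some g  <->  v ~ w and the arc (v,w) has gain g;               *)
(* psi v w = None    <->  v, w not adjacent (the value 0 of CG).            *)
Definition gain_graph (G : groupType) (n : nat) (psi : 'I_n -> 'I_n -> option G) :=
  (forall v, psi v v = None) /\
  (forall v w, psi w v = omap (fun g => (g^-1)%g) (psi v w)).

Definition unitary_rep (C : numClosedFieldType) (G : groupType) (d : nat)
    (pi : G -> 'M[C]_d) :=
  (forall g h : G, pi (g * h)%g = pi g *m pi h) /\
  (forall g : G, pi g *m (map_mx Num.conj (pi g))^T = 1%:M).

Definition pi_entry (C : numClosedFieldType) (G : groupType) (d : nat)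
    (pi : G -> 'M[C]_d) (x : option G) : 'M[C]_d :=
  if x is Some g then pi g else 0.

Definition pi_adj (C : numClosedFieldType) (G : groupType) (n d : nat)
    (pi : G -> 'M[C]_d) (psi : 'I_n -> 'I_n -> option G) :
    'M[C]_(\sum_(i < n) d) :=
  \mxblock_(i < n, j < n) pi_entry pi (psi i j).

(* pi-cospectral: pi(A) and pi(A') have the same spectrum (eigenvalues with
   multiplicities), i.e. the same characteristic polynomial. *)
Definition pi_cospectral (C : numClosedFieldType) (G : groupType) (n d : nat)
    (pi : G -> 'M[C]_d) (psi psi' : 'I_n -> 'I_n -> option G) :=
  char_poly (pi_adj pi psi) = char_poly (pi_adj pi psi').

(* Partitions alpha = {C_0,...,C_(2k)} given by the class map part.          *)
Definition cls (n m : nat) (part : 'I_n -> 'I_m) (c : nat) : {set 'I_n} :=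
  [set v | nat_of_ord (part v) == c].

Definition ordered_partition (n m : nat) (part : 'I_n -> 'I_m) :=
  forall v w : 'I_n, (v <= w)%N -> (part v <= part w)%N.

(* coefficient of g in Psi_c(v) = sum_{w in C_c, w ~ v} psi(v,w) in CG *)
Definition Psi_coef (G : groupType) (n m : nat) (part : 'I_n -> 'I_m)
    (psi : 'I_n -> 'I_n -> option G) (c : nat) (v : 'I_n) (g : G) : nat :=
  #|[set w | (w \in cls part c) && (psi v w == Some g)]|.

Definition Psi_eq (G : groupType) (n m : nat) (part : 'I_n -> 'I_m)
    (psi : 'I_n -> 'I_n -> option G) (c c' : nat) (v : 'I_n) :=
  forall g : G, Psi_coef part psi c v g = Psi_coef part psi c' v g.

(* Psi_c(v) = |C_c| x  in CG, for x in G u {0} (None = 0) *)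
Definition Psi_scal (G : groupType) (n m : nat) (part : 'I_n -> 'I_m)
    (psi : 'I_n -> 'I_n -> option G) (c : nat) (v : 'I_n) (x : option G) :=
  forall g : G, Psi_coef part psi c v g = (#|cls part c| * (x == Some g))%N.

Definition pi_Psi (C : numClosedFieldType) (G : groupType) (n m d : nat)
    (pi : G -> 'M[C]_d) (part : 'I_n -> 'I_m)
    (psi : 'I_n -> 'I_n -> option G) (c : nat) (v : 'I_n) : 'M[C]_d :=
  \sum_(w < n | w \in cls part c) pi_entry pi (psi v w).

Definition WQH_partition (C : numClosedFieldType) (G : groupType) (n k d : nat)
    (psi : 'I_n -> 'I_n -> option G) (pi : G -> 'M[C]_d)
    (part : 'I_n -> 'I_(k.*2.+1)) :=
  [/\ (forall i, odd i -> (i < k.*2)%N -> #|cls part i| = #|cls part i.+1|),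
      (forall i j (v v' : 'I_n), (1 <= i <= k.*2)%N -> (1 <= j <= k.*2)%N ->
          v \in cls part i -> v' \in cls part i ->
          pi_Psi pi part psi j v = pi_Psi pi part psi j v'),
      (forall i j (v v' : 'I_n), odd i -> (i < k.*2)%N -> odd j -> (j < k.*2)%N ->
          v \in cls part i -> v' \in cls part i.+1 ->
          pi_Psi pi part psi j v = pi_Psi pi part psi j.+1 v' /\
          pi_Psi pi part psi j.+1 v = pi_Psi pi part psi j v')
    & (forall i (v : 'I_n), odd i -> (i < k.*2)%N -> v \in cls part 0 ->
          Psi_eq part psi i i.+1 v \/
          exists g1 g2 : option G, [/\ g1 <> g2,
             Psi_scal part psi i v g1 & Psi_scal part psi i.+1 v g2])].

(* the odd index of the pair {C_(2t-1), C_(2t)} containing class c >= 1 *)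
Definition oddrep (c : nat) : nat := if odd c then c else c.-1.

Definition WQH_switching (G : groupType) (n m : nat)
    (psi : 'I_n -> 'I_n -> option G) (part : 'I_n -> 'I_m)
    (psia : 'I_n -> 'I_n -> option G) :=
  forall v w : 'I_n,
  [/\ (nat_of_ord (part v) == 0%N) = (nat_of_ord (part w) == 0%N) ->
        psia v w = psi v w,
      nat_of_ord (part v) = 0%N -> nat_of_ord (part w) <> 0%N ->
        let i := oddrep (part w) in
        (Psi_eq part psi i i.+1 v -> psia v w = psi v w) /\
        (forall g1 g2 : option G, g1 <> g2 ->
           Psi_scal part psi i v g1 -> Psi_scal part psi i.+1 v g2 ->
           psia v w = if nat_of_ord (part w) == i then g2 else g1)
    & nat_of_ord (part v) <> 0%N -> nat_of_ord (part w) = 0%N ->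
        psia v w = omap (fun g => (g^-1)%g) (psia w v)].

(* Q_alpha = diag(I_|C_0|, Q_(m_1), ..., Q_(m_k)) (entries are scalar
   multiples of 1_G, recorded here by their complex coefficient) *)
Definition Q_alpha (C : numClosedFieldType) (n m : nat) (part : 'I_n -> 'I_m)
    : 'M[C]_n :=
  \matrix_(v, w)
    if nat_of_ord (part v) == 0%N then
      (if nat_of_ord (part w) == 0%N then (v == w)%:R else 0)
    else if (nat_of_ord (part w) != 0%N) &&
            (oddrep (part v) == oddrep (part w)) then
      (let mt := (#|cls part (oddrep (part v))|%:R : C) in
       if nat_of_ord (part v) == nat_of_ord (part w)
       then (v == w)%:R - mt^-1 else mt^-1)
    else 0.

Definition pi_Q (C : numClosedFieldType) (n m d : nat) (part : 'I_n -> 'I_m)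
    : 'M[C]_(\sum_(i < n) d) :=
  \mxblock_(i < n, j < n) ((Q_alpha C part i j)%:M : 'M[C]_d).

From HB Require Import structures.
From mathcomp Require Import all_boot all_order all_algebra.
From mathcomp Require Import reals complex.
From mathcomp Require Import zify ring.
Import GRing.Theory Num.Theory.
Local Open Scope ring_scope.

(* Q_alpha is a symmetric involution, so pi(Q_alpha) pi(A) pi(Q_alpha) is
   similar to pi(A) and cospectrality follows from the matrix identity, which
   is checked entrywise.  The row of Q_alpha at a vertex v of C_c, c >= 1,
   sends a vector X to X_v - (sum_(C_c) X - sum_(C_c') X) / |C_c|, where C_c'
   is the partner class of C_c.  Conditions (2) and (3) make the class sums
   pi(Psi_j) constant on each class and exchanged between partner classes; as
   pi(psi(w,v)) is the adjoint of pi(psi(v,w)), the same holds for column sums,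
   so for v, w outside C_0 the row and column corrections of Q A Q cancel.
   For v in C_0 only the correction along the pair of w survives: it vanishes
   in case (4a), and in case (4b), where psi(v, .) is constant on both classes
   of the pair, it exchanges g1 and g2, which is exactly psi^alpha. *)

(* The index of the other class of the pair containing C_c; partner 0 = 0. *)
Definition partner (c : nat) : nat := if odd c then c.+1 else c.-1.

Lemma odd_mod2 c : odd c = (c %% 2 == 1)%N.
Proof. by rewrite modn2; case: odd. Qed.

Lemma partnerK : involutive partner.
Proof. by move=> c; rewrite /partner !odd_mod2; do 2 case: ifP; lia. Qed.

Lemma partner_eq0 c : (partner c == 0)%N = (c == 0)%N.
Proof. by rewrite /partner odd_mod2; case: ifP; lia. Qed.

Lemma partner_eq c : (partner c == c) = (c == 0)%N.
Proof. by rewrite /partner odd_mod2; case: ifP; lia. Qed.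

Lemma partner_leq_double k c : (c <= k.*2)%N -> (partner c <= k.*2)%N.
Proof. by rewrite /partner odd_mod2; case: ifP; lia. Qed.

Lemma odd_oddrep {c} : c != 0%N -> odd (oddrep c).
Proof. by rewrite /oddrep !odd_mod2; case: ifP; lia. Qed.

Lemma oddrep_lt_double {k c} : c != 0%N -> (c <= k.*2)%N -> (oddrep c < k.*2)%N.
Proof. by rewrite /oddrep odd_mod2; case: ifP; lia. Qed.

Lemma eq_oddrep c c' : c != 0%N -> c' != 0%N ->
  (oddrep c' == oddrep c) = (c' == c) || (c' == partner c).
Proof. by rewrite /oddrep /partner !odd_mod2; do 2 case: ifP; lia. Qed.

Variant class_pair_spec (k : nat) : nat -> nat -> nat -> Prop :=
  | ClassPairOdd i of odd i & (i < k.*2)%N : class_pair_spec k i i.+1 i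
  | ClassPairEven i of odd i & (i < k.*2)%N : class_pair_spec k i.+1 i i.

Lemma class_pairP {k c} : c != 0%N -> (c <= k.*2)%N ->
  class_pair_spec k c (partner c) (oddrep c).
Proof.
move=> c0 ck; move: (odd_oddrep c0) (oddrep_lt_double c0 ck).
case: c c0 ck => [|c] // _ _; rewrite /oddrep /partner /=.
by case: ifP => _ oi lti; [exact: ClassPairOdd | exact: ClassPairEven].
Qed.

Lemma scaleVn_mulrn (F : fieldType) (V : lmodType F) (m1 m2 : nat) (a b : V) :
  m1%:R != 0 :> F -> m2%:R != 0 :> F ->
  a *+ m2 = b *+ m1 -> m1%:R^-1 *: a = m2%:R^-1 *: b :> V.
Proof.
move=> m1_neq0 m2_neq0 eq_ab.
have -> : a = (m2%:R^-1 * m1%:R) *: b.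
  by rewrite -scalerA scaler_nat -eq_ab -scaler_nat scalerA mulVf // scale1r.
by rewrite scalerA mulrCA mulVf // mulr1.
Qed.

Lemma subr_scaleVn_mulrnB (F : fieldType) (V : lmodType F) (m : nat) (a b : V) :
  m%:R != 0 :> F -> a - m%:R^-1 *: (a *+ m - b *+ m) = b.
Proof.
move=> m_neq0; rewrite -!scaler_nat -scalerBr scalerA mulVf // scale1r.
by rewrite opprB addrC subrK.
Qed.

Lemma char_poly_conj_involution (R : comNzRingType) m (P A : 'M[R]_m) :
  P *m P = 1%:M -> char_poly (P *m A *m P) = char_poly A.
Proof.
move=> PP1; rewrite /char_poly /char_poly_mx.
set P' := map_mx polyC P.
have P'P'1 : P' *m P' = 1%:M by rewrite -map_mxM PP1 map_scalar_mx.
have -> : 'X%:M - map_mx polyC (P *m A *m P) = P' *m ('X%:M - map_mx polyC A) *m P'.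
  by rewrite !map_mxM mulmxBr mulmxBl scalar_mxC -[_ *m P' *m P']mulmxA P'P'1 mulmx1.
by rewrite !det_mulmx mulrAC -det_mulmx P'P'1 det1 mul1r.
Qed.

Lemma mul_mxblock_scalar (R : comNzRingType) n d (A B : 'M[R]_n) :
  \mxblock_(i < n, j < n) ((A i j)%:M : 'M_d) *m \mxblock_(i < n, j < n) ((B i j)%:M : 'M_d)
  = \mxblock_(i < n, j < n) (((A *m B) i j)%:M : 'M_d).
Proof.
rewrite mul_mxblock; apply: eq_mxblock => i j.
by rewrite mxE raddf_sum; apply: eq_bigr => l _; rewrite -scalar_mxM.
Qed.

Lemma mxblock_scalar1 (R : comNzRingType) n d :
  \mxblock_(i < n, j < n) (((1%:M : 'M[R]_n) i j)%:M : 'M_d) = 1%:M.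
Proof.
rewrite -(@mxdiagZ _ _ (fun=> d)) /mxdiag; apply: eq_mxblock => i j.
by rewrite mxE conform_mx_id; case: eqP; rewrite ?raddf0.
Qed.

Section UnitaryRep.
Variables (C : numClosedFieldType) (G : groupType) (d : nat) (pi : G -> 'M[C]_d).
Hypothesis pi_unitary : unitary_rep pi.

Lemma unitary_rep1 : pi 1%g = 1%:M.
Proof.
case: pi_unitary => pi_mul pi_adj; have pi11 := pi_mul 1%g 1%g; rewrite mulg1 in pi11.
by have := pi_adj 1%g; rewrite {1}pi11 -mulmxA pi_adj mulmx1.
Qed.

Lemma unitary_repV g : pi g^-1%g = (map_mx Num.conj (pi g))^T.
Proof.
case: pi_unitary => pi_mul pi_adj.
by rewrite -[RHS]mul1mx -unitary_rep1 -(mulVg g) pi_mul -mulmxA pi_adj mulmx1.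
Qed.

End UnitaryRep.

Section ClassSums.
Context {G : groupType} {n m : nat} {part : 'I_n -> 'I_m}.
Context {psi : 'I_n -> 'I_n -> option G} {v : 'I_n}.

Lemma sum_cls_by_gain (V : zmodType) (F : option G -> V) c :
  \sum_(u in cls part c) F (psi v u) =
  \sum_(x <- undup (codom (psi v))) F x *+ #|[set u in cls part c | psi v u == x]|.
Proof.
transitivity (\sum_(u in cls part c) \sum_(x <- undup (codom (psi v)))
                (if psi v u == x then F x else 0)).
  apply: eq_bigr => u _.
  rewrite (bigD1_seq (psi v u)) ?undup_uniq ?mem_undup ?codom_f //= eqxx.
  by rewrite big1 ?addr0 // => x; rewrite eq_sym => /negbTE ->.
rewrite exchange_big; apply: eq_bigr => x _.
by rewrite -big_mkcondr -sumr_const; apply: eq_bigl => u; rewrite inE.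
Qed.

Lemma eq_sum_cls_Psi {V : zmodType} {F : option G -> V} {c c'} :
  F None = 0 -> Psi_eq part psi c c' v ->
  \sum_(u in cls part c) F (psi v u) = \sum_(u in cls part c') F (psi v u).
Proof.
move=> F0 eq_cc'; rewrite !sum_cls_by_gain; apply: eq_bigr => -[g|] _.
  by have := eq_cc' g; rewrite /Psi_coef => ->.
by rewrite F0 !mul0rn.
Qed.

Lemma Psi_scal_val {c x u} :
  Psi_scal part psi c v x -> u \in cls part c -> psi v u = x.
Proof.
move=> scal_x u_c; case: x scal_x => [h|] scal_x.
  have sub : [set w in cls part c | psi v w == Some h] \subset cls part c.
    by apply/subsetP => w; rewrite inE => /andP[].
  have := scal_x h; rewrite /Psi_coef eqxx muln1 => /subset_cardP/(_ sub) eq_cls.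
  by move: u_c; rewrite -eq_cls inE => /andP[_ /eqP].
case Eu: (psi v u) => [g|] //.
have := scal_x g; rewrite /= muln0 /Psi_coef => /eqP; rewrite cards_eq0 => /eqP eq0.
have : u \in [set w in cls part c | psi v w == Some g] by rewrite in_set u_c Eu /=.
by rewrite eq0 inE.
Qed.

Lemma sum_cls_Psi_scal {V : zmodType} (F : option G -> V) {c x} :
  Psi_scal part psi c v x ->
  \sum_(u in cls part c) F (psi v u) = F x *+ #|cls part c|.
Proof.
by move=> scal_x; rewrite -sumr_const; apply: eq_bigr => u /(Psi_scal_val scal_x) ->.
Qed.

End ClassSums.

Section QAlpha.
Context {C : numClosedFieldType} {n k : nat} {part : 'I_n -> 'I_(k.*2.+1)}.
Hypothesis card_pair :
  forall i, odd i -> (i < k.*2)%N -> #|cls part i| = #|cls part i.+1|.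

Local Notation cl c := (cls part c).
Local Notation cv v := (nat_of_ord (part v)).
Local Notation sz c := #|cls part c|.
Local Notation Q := (Q_alpha C part).

Lemma part_leq_double v : (cv v <= k.*2)%N.
Proof. by rewrite -ltnS. Qed.

Lemma card_cls_partner c : (c <= k.*2)%N -> sz (partner c) = sz c.
Proof.
move=> ck; have [->|c0] := eqVneq c 0%N; first by [].
by case: (class_pairP c0 ck) => i oi lti; rewrite (card_pair _ oi lti).
Qed.

Lemma card_cls_oddrep c : c != 0%N -> (c <= k.*2)%N -> sz (oddrep c) = sz c.
Proof.
by move=> c0 ck; case: (class_pairP c0 ck) => // i oi lti; rewrite (card_pair _ oi lti).
Qed.

Lemma card_cls_gt0 v : (0 < sz (cv v))%N.
Proof. by apply/card_gt0P; exists v; rewrite inE. Qed.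

Lemma natr_card_cls_neq0 v : (sz (cv v))%:R != 0 :> C.
Proof. by rewrite pnatr_eq0 -lt0n card_cls_gt0. Qed.

Lemma Q_alpha_C0 v w : (cv v == 0%N) || (cv w == 0%N) -> Q v w = (v == w)%:R.
Proof.
rewrite mxE; have [v0|v0] := eqVneq (cv v) 0%N; have [w0|w0] := eqVneq (cv w) 0%N;
  rewrite //=; case: eqVneq => [eq_vw|//].
- by move: w0; rewrite -eq_vw v0.
- by move: v0; rewrite eq_vw w0.
Qed.

Lemma Q_alpha_row v u : cv v != 0%N ->
  Q v u = (v == u)%:R - (cv u == cv v)%:R / (sz (cv v))%:R
          + (cv u == partner (cv v))%:R / (sz (cv v))%:R.
Proof.
move=> v0; have [u0|u0] := eqVneq (cv u) 0%N.
  rewrite Q_alpha_C0 ?u0 ?orbT // ![(0%N == _)]eq_sym partner_eq0 (negbTE v0).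
  by rewrite !mul0r subr0 addr0.
rewrite mxE (negbTE v0) u0 /= (eq_sym (oddrep _)) eq_oddrep //.
rewrite card_cls_oddrep ?part_leq_double //.
have [eq_uv|neq_uv] := eqVneq (cv u) (cv v).
  by rewrite eq_uv eq_sym partner_eq (negbTE v0) mul0r addr0 mul1r.
have -> : (v == u) = false by apply: contraNF neq_uv => /eqP->.
by rewrite mul0r subr0 add0r; case: eqP => _; rewrite ?mul1r ?mul0r.
Qed.

Lemma Q_alpha_sym v w : Q v w = Q w v.
Proof.
rewrite !mxE; have [v0|v0] := eqVneq (cv v) 0%N; have [w0|w0] := eqVneq (cv w) 0%N;
  rewrite /= ?(eq_sym v) // (eq_sym (oddrep (cv w))).
by case: eqP => [eq_vw|] //=; rewrite eq_vw (eq_sym (cv w)) (eq_sym w).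
Qed.

Lemma sum_Q_alpha_C0 {V : lmodType C} (X : 'I_n -> V) {v} : cv v = 0%N ->
  \sum_u Q v u *: X u = X v.
Proof.
move=> v0; rewrite (bigD1 v) //= big1 => [|u /negbTE neq_uv].
  by rewrite Q_alpha_C0 ?v0 // eqxx scale1r addr0.
by rewrite Q_alpha_C0 ?v0 // eq_sym neq_uv scale0r.
Qed.

Lemma sum_cls_indicator_scale (V : lmodType C) (X : 'I_n -> V) c (a : C) :
  \sum_u ((cv u == c)%:R * a) *: X u = a *: \sum_(u in cl c) X u.
Proof.
rewrite scaler_sumr [RHS]big_mkcond; apply: eq_bigr => u _; rewrite inE.
by case: eqP => _; rewrite ?mul1r ?mul0r ?scale0r.
Qed.

Lemma sum_Q_alpha {V : lmodType C} (X : 'I_n -> V) {v} : cv v != 0%N ->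
  \sum_u Q v u *: X u = X v - (sz (cv v))%:R^-1 *:
     (\sum_(u in cl (cv v)) X u - \sum_(u in cl (partner (cv v))) X u).
Proof.
move=> v0; under eq_bigr do rewrite Q_alpha_row // scalerDl scalerBl.
rewrite big_split sumrB /= !sum_cls_indicator_scale (bigD1 v) //= eqxx scale1r.
rewrite big1 => [|u /negbTE neq_uv]; last by rewrite eq_sym neq_uv scale0r.
by rewrite addr0 scalerBr opprD opprK addrA.
Qed.

Lemma sum_cls_Q_alpha c w : c != 0%N ->
  \sum_(l in cl c) Q l w = (c == partner (cv w))%:R.
Proof.
move=> c0; have -> : \sum_(l in cl c) Q l w = \sum_l Q w l *: ((cv l == c)%:R : C^o).
  rewrite big_mkcond; apply: eq_bigr => l _; rewrite inE Q_alpha_sym.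
  by case: eqP => _; rewrite /GRing.scale /= ?mulr1 ?mulr0.
have sum_ind c' : \sum_(l in cl c') ((cv l == c)%:R : C^o) = (c' == c)%:R *+ sz c'.
  by rewrite -sumr_const; apply: eq_bigr => l; rewrite inE => /eqP->.
have [w0|w0] := eqVneq (cv w) 0%N.
  by rewrite sum_Q_alpha_C0 // w0 eq_sym (negbTE c0).
rewrite sum_Q_alpha // !sum_ind card_cls_partner ?part_leq_double //.
by rewrite subr_scaleVn_mulrnB ?natr_card_cls_neq0 // eq_sym.
Qed.

Lemma Q_alpha_invol : Q *m Q = 1%:M.
Proof.
apply/matrixP => v w; rewrite !mxE -[LHS]/(\sum_l Q v l *: (Q l w : C^o)).
have [v0|v0] := eqVneq (cv v) 0%N.
  by rewrite sum_Q_alpha_C0 // Q_alpha_C0 ?v0.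
rewrite sum_Q_alpha // !sum_cls_Q_alpha ?partner_eq0 //.
rewrite (can_eq partnerK) -(inv_eq partnerK) Q_alpha_row // !(eq_sym (cv w)).
rewrite /GRing.scale /=; ring.
Qed.

Lemma pi_Q_invol d : pi_Q C d part *m pi_Q C d part = 1%:M.
Proof. by rewrite mul_mxblock_scalar Q_alpha_invol mxblock_scalar1. Qed.

End QAlpha.

Section Switching.
Context {C : numClosedFieldType} {G : groupType} {n d k : nat}.
Context {psi psia : 'I_n -> 'I_n -> option G}.
(* The spaces keep "{pi" from being read as the quotient notation {pi x}. *)
Context { pi : G -> 'M[C]_d }.
Context {part : 'I_n -> 'I_(k.*2.+1)}.
Hypotheses (psi_gain : gain_graph psi) (pi_unitary : unitary_rep pi).
Hypotheses (alpha_WQH : WQH_partition psi pi part).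
Hypothesis (psia_switch : WQH_switching psi part psia).

Local Notation cl c := (cls part c).
Local Notation cv v := (nat_of_ord (part v)).
Local Notation sz c := #|cls part c|.
Local Notation Q := (Q_alpha C part).
Local Notation E u w := (pi_entry pi (psi u w)).
Local Notation Psi c v := (pi_Psi pi part psi c v).

Let card_pair i : odd i -> (i < k.*2)%N -> sz i = sz i.+1.
Proof. by case: alpha_WQH => card_pair _ _ _; exact: card_pair. Qed.

Lemma pi_entry_adj u w : E u w = (map_mx Num.conj (E w u))^T.
Proof.
case: psi_gain => _ ->; case: (psi w u) => [g|] /=; first exact: unitary_repV.
by rewrite map_mx0 trmx0.
Qed.

Lemma sum_cls_pi_entry c x : \sum_(u in cl c) E u x = (map_mx Num.conj (Psi c x))^T.
Proof. by rewrite /pi_Psi !raddf_sum; apply: eq_bigr => u _; rewrite pi_entry_adj. Qed.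

Lemma Psi_const_cls {j u v} : cv u = cv v -> cv v != 0%N -> j != 0%N -> (j <= k.*2)%N ->
  Psi j u = Psi j v.
Proof.
move=> uv v0 j0 jk; case: alpha_WQH => _ Psi_const _ _.
by apply: (Psi_const (cv v)); rewrite ?inE ?uv ?lt0n ?v0 ?j0 ?part_leq_double.
Qed.

Lemma Psi_partner_cls {j u v} : cv u = partner (cv v) -> cv v != 0%N ->
  j != 0%N -> (j <= k.*2)%N -> Psi j u = Psi (partner j) v.
Proof.
move=> uv v0 j0 jk; case: alpha_WQH => _ _ Psi_swap _.
have hv : v \in cl (cv v) by rewrite inE.
have hu : u \in cl (partner (cv v)) by rewrite inE uv.
move: hv hu; case: (class_pairP v0 (part_leq_double v)) => i oi lti hv hu;
  case: (class_pairP j0 jk) => i' oi' lti'.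
- by have [_ ->] := Psi_swap _ _ _ _ oi lti oi' lti' hv hu.
- by have [-> _] := Psi_swap _ _ _ _ oi lti oi' lti' hv hu.
- by have [-> _] := Psi_swap _ _ _ _ oi lti oi' lti' hu hv.
- by have [_ ->] := Psi_swap _ _ _ _ oi lti oi' lti' hu hv.
Qed.

Lemma switching_C0_cases {v u} : cv v = 0%N -> cv u != 0%N ->
  Psi_eq part psi (cv u) (partner (cv u)) v /\ psia v u = psi v u \/
  exists x y, [/\ Psi_scal part psi (cv u) v x, Psi_scal part psi (partner (cv u)) v y
                & psia v u = y].
Proof.
move=> v0 u0; case: alpha_WQH => _ _ _ C0_cases.
have [_ /(_ v0 (elimN eqP u0)) [switch_eq switch_scal] _] := psia_switch v u.
have hv : v \in cl 0 by rewrite inE v0.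
move: switch_eq switch_scal; case: (class_pairP u0 (part_leq_double u)) => i oi lti
  switch_eq switch_scal; case: (C0_cases i v oi lti hv) => [eq_i|[g1 [g2 [g12 scal1 scal2]]]].
- by left; split; last exact: switch_eq.
- by right; exists g1, g2; rewrite (switch_scal g1 g2) // eqxx.
- by left; split => [g|]; [rewrite eq_i | exact: switch_eq].
- by right; exists g2, g1; rewrite (switch_scal g1 g2) // gtn_eqF.
Qed.

Lemma switching_C0_entry (V : lmodType C) (F : option G -> V) v u :
  F None = 0 -> cv v = 0%N -> cv u != 0%N ->
  F (psi v u) - (sz (cv u))%:R^-1 *:
    (\sum_(l in cl (cv u)) F (psi v l) - \sum_(l in cl (partner (cv u))) F (psi v l))
  = F (psia v u).
Proof.
move=> F0 v0 u0.
have [[eq_c ->]|[x [y [scal_x scal_y ->]]]] := switching_C0_cases v0 u0.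
  by rewrite (eq_sum_cls_Psi F0 eq_c) subrr scaler0 subr0.
have hu : u \in cl (cv u) by rewrite inE.
rewrite (Psi_scal_val scal_x hu) (sum_cls_Psi_scal F scal_x) (sum_cls_Psi_scal F scal_y).
by rewrite card_cls_partner ?part_leq_double // subr_scaleVn_mulrnB // natr_card_cls_neq0.
Qed.

Lemma sum_cls_Psi_own c v : cv v != 0%N -> c != 0%N -> (c <= k.*2)%N ->
  \sum_(u in cl (cv v)) Psi c u = Psi c v *+ sz (cv v).
Proof.
move=> v0 c0 ck; rewrite -sumr_const; apply: eq_bigr => u.
by rewrite inE => /eqP uv; exact: Psi_const_cls.
Qed.

Lemma sum_cls_Psi_partner c v : cv v != 0%N -> c != 0%N -> (c <= k.*2)%N ->
  \sum_(u in cl (partner (cv v))) Psi c u = Psi (partner c) v *+ sz (cv v).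
Proof.
move=> v0 c0 ck; rewrite -(card_cls_partner card_pair _ (part_leq_double v)) -sumr_const.
by apply: eq_bigr => u; rewrite inE => /eqP uv; exact: Psi_partner_cls.
Qed.

Lemma exchange_sum_cls c c' :
  \sum_(l in cl c) \sum_(u in cl c') E u l = \sum_(u in cl c') Psi c u.
Proof. exact: exchange_big. Qed.

Lemma sum_cls_QE c v : cv v != 0%N -> c != 0%N -> (c <= k.*2)%N ->
  \sum_(l in cl c) \sum_u Q v u *: E u l = Psi (partner c) v.
Proof.
move=> v0 c0 ck.
under eq_bigr => l _ do rewrite (sum_Q_alpha card_pair (fun u => E u l) v0).
rewrite sumrB -scaler_sumr sumrB !exchange_sum_cls.
rewrite sum_cls_Psi_own // sum_cls_Psi_partner //.
exact: subr_scaleVn_mulrnB (natr_card_cls_neq0 v).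
Qed.

Lemma sum_cls_pi_entry_mulrn c w : cv w != 0%N -> c != 0%N -> (c <= k.*2)%N ->
  (\sum_(u in cl c) E u w) *+ sz (cv w) = \sum_(u in cl c) Psi (cv w) u.
Proof.
move=> w0 c0 ck; rewrite -exchange_sum_cls -sumr_const; apply: eq_bigr => l.
by rewrite inE => /eqP lw; rewrite !sum_cls_pi_entry (Psi_const_cls lw).
Qed.

Lemma QEQ_entry_off_C0 v w : cv v != 0%N -> cv w != 0%N ->
  \sum_l Q w l *: \sum_u Q v u *: E u l = E v w.
Proof.
move=> v0 w0; have vk := part_leq_double v; have wk := part_leq_double w.
rewrite (sum_Q_alpha card_pair (fun l => \sum_u Q v u *: E u l) w0).
rewrite !sum_cls_QE ?partner_eq0 ?partner_leq_double // partnerK.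
rewrite (sum_Q_alpha card_pair (fun u => E u w) v0) scalerBr.
have own : (sz (cv v))%:R^-1 *: \sum_(u in cl (cv v)) E u w =
           (sz (cv w))%:R^-1 *: Psi (cv w) v.
  apply: scaleVn_mulrn; rewrite ?natr_card_cls_neq0 //.
  by rewrite sum_cls_pi_entry_mulrn // sum_cls_Psi_own.
have other : (sz (cv v))%:R^-1 *: \sum_(u in cl (partner (cv v))) E u w =
             (sz (cv w))%:R^-1 *: Psi (partner (cv w)) v.
  apply: scaleVn_mulrn; rewrite ?natr_card_cls_neq0 //.
  by rewrite sum_cls_pi_entry_mulrn ?partner_eq0 ?partner_leq_double // sum_cls_Psi_partner.
by rewrite own other scalerBr opprB addrK.
Qed.

Lemma pi_entry_switching v w :
  pi_entry pi (psia v w) = \sum_l Q w l *: \sum_u Q v u *: E u l.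
Proof.
have [switch_eq _ switch_inv] := psia_switch v w.
have [v0|v0] := eqVneq (cv v) 0%N.
  under eq_bigr => l _ do rewrite (sum_Q_alpha_C0 (fun u => E u l) v0).
  have [w0|w0] := eqVneq (cv w) 0%N.
    by rewrite (sum_Q_alpha_C0 (fun l => E v l) w0) switch_eq // v0 w0.
  by rewrite (sum_Q_alpha card_pair (fun l => E v l) w0) switching_C0_entry.
have [w0|w0] := eqVneq (cv w) 0%N.
  rewrite (sum_Q_alpha_C0 (fun l => \sum_u Q v u *: E u l) w0).
  rewrite (sum_Q_alpha card_pair (fun u => E u w) v0) switch_inv //; last exact/eqP.
  (* The C_0-row case at (w, v), read through the gains of the reversed arcs. *)
  pose F o := pi_entry pi (omap (fun g => g^-1)%g o).
  have F_psi u : F (psi w u) = E u w by case: psi_gain => _ psi_inv; rewrite [psi u w]psi_inv.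
  have sum_F c : \sum_(u in cl c) F (psi w u) = \sum_(u in cl c) E u w.
    by apply: eq_bigr => u _; exact: F_psi.
  by rewrite -/(F (psia w v)) -switching_C0_entry // F_psi !sum_F.
by rewrite QEQ_entry_off_C0 // switch_eq // (negbTE v0) (negbTE w0).
Qed.

Lemma pi_adj_switching :
  pi_adj pi psia = pi_Q C d part *m pi_adj pi psi *m pi_Q C d part.
Proof.
rewrite /pi_adj /pi_Q !mul_mxblock; apply: eq_mxblock => v w.
rewrite pi_entry_switching; apply: eq_bigr => l _.
rewrite mul_mx_scalar Q_alpha_sym; congr (_ *: _).
by apply: eq_bigr => u _; rewrite mul_scalar_mx.
Qed.

End Switching.

Theorem mainTheorem3 (R : realType) (G : groupType) (n d k : nat)
    (psi : 'I_n -> 'I_n -> option G) (pi : G -> 'M[R[i]]_d)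
    (part : 'I_n -> 'I_(k.*2.+1)) (psia : 'I_n -> 'I_n -> option G) :
  gain_graph psi ->
  unitary_rep pi ->
  ordered_partition part ->
  WQH_partition psi pi part ->
  WQH_switching psi part psia ->
  pi_adj pi psia = pi_Q R[i] d part *m pi_adj pi psi *m pi_Q R[i] d part
  /\ pi_cospectral pi psi psia.
Proof.
(* Q_alpha and psi^alpha only refer to class membership. *)
move=> psi_gain pi_unitary _ alpha_WQH psia_switch.
have QAQ := pi_adj_switching psi_gain pi_unitary alpha_WQH psia_switch.
split; first exact: QAQ.
rewrite /pi_cospectral QAQ char_poly_conj_involution //.
by apply: pi_Q_invol; case: alpha_WQH.
Qed.
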